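(* Suppose (S) and (L) hold and: (MA1) $\operatorname{cov}(W_i^K,W_j^K)=\mathbb 1(i=j)+\rho\mathbb 1(|i-j|=1)$ for $i,j\in\{1,\dots,K\}$, with $|\rho|<1/2$; (MA2) there is $C<\infty$ with $\sup_{i\le K}|\pi_i^K|\le C/\sqrt K$ for all $K$; (MA3) $\rho\sum_{i=1}^{K-1}\pi_i^K\pi_{i+1}^K/\sum_{i=1}^K(\pi_i^K)^2$ converges to a value in $[-\infty,\infty]$ as $K\to\infty$; (MA4) there is $\epsilon>0$ with $\operatorname{var}(\sum_{i=1}^K\pi_i^KW_i^K)>\epsilon$ for all $K$. Then (P) holds.
   Context: For each $K$, $W^K=(W_1^K,\dots,W_K^K)$ is a random vector and $\pi^K\in\mathbb R^K$. $S\in\{0,1\}^K$ is random, independent of everything else, with moments $\operatorname{var}_S$ etc.; $d_1=\sum_iS_i$, $d_2=K-d_1$. (S) $S$ is uniform over vectors in $\{0,1\}^K$ with exactly $d_1$ ones. (L) $d_1,K\to\infty$ with $d_2/d_1\to r\in(0,\infty)$. (P): (P1) there are $0<\epsilon\le M<\infty$ with $\epsilon\le\operatorname{var}(\sum_i\pi_i^KW_i^K)\le M$ for all $K$; (P2) $\operatorname{var}_S(\sum_{i,j}S_iS_j\operatorname{cov}(\pi_i^KW_i^K,\pi_j^KW_j^K))\to0$ and the same with $S_i,S_j$ replaced by $1-S_i,1-S_j$; (P3) $\sum_i\operatorname{var}(\pi_i^KW_i^K)/\operatorname{var}(\sum_i\pi_i^KW_i^K)$ converges to a finite limit. *)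

From HB Require Import structures.
From mathcomp Require Import all_boot all_order all_algebra.
From mathcomp Require Import all_classical all_reals all_analysis.
Set Implicit Arguments. Unset Strict Implicit. Unset Printing Implicit Defensive.
Import Order.TTheory GRing.Theory Num.Theory.
Local Open Scope ring_scope.

(* The law of S under (S): uniform over the vectors s in {0,1}^K with
   exactly d1 ones (encoded as boolean finite functions on 'I_K). *)
Definition Svecs (K d1 : nat) : {set {ffun 'I_K -> bool}} :=
  [set s : {ffun 'I_K -> bool} | #|[set i | s i]| == d1].

Definition meanS {R : realType} (K d1 : nat) (f : {ffun 'I_K -> bool} -> R) : R :=
  (#|Svecs K d1|%:R)^-1 * \sum_(s in Svecs K d1) f s.

Definition varS {R : realType} (K d1 : nat) (f : {ffun 'I_K -> bool} -> R) : R :=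
  meanS d1 (fun s => (f s - meanS d1 f) ^+ 2).

(* With A = sum_i pi_i^2 and B = sum_i pi_i pi_(i+1), the MA(1) covariances give
   var(sum_i pi_i W_i) = A + 2 rho B, and |B| <= A <= C^2 by (MA2).  Hence the variance
   lies between the eps of (MA4) and 2 C^2, which is (P1), and the ratio in (P3) equals
   1 / (1 + 2 x_K) with x_K = rho B / A, whose limit exists by (MA3) and is finite since
   |x_K| <= |rho| < 1/2.
   For (P2), the covariance matrix of the pi_i W_i is tridiagonal with entries O(1/K).
   For S uniform with d ones, P(A subset of S) depends only on |A| and equals (d/K)^|A| + O(|A|^2/K),
   so inclusion events of disjoint pairs are almost uncorrelated.  Expanding the variance
   of the quadratic form over quadruples (i, j, k, l) then gives O(1/K), uniformly in d;
   complementing S gives the second half of (P2). *)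
From HB Require Import structures.
From mathcomp Require Import all_boot all_order all_algebra.
From mathcomp Require Import all_classical all_reals all_analysis.
From mathcomp Require Import ring lra zify.
Import Order.TTheory GRing.Theory Num.Theory.
Import numFieldNormedType.Exports.
Local Open Scope ring_scope.
Section SecondMoments.
Context {R : realType} {d : measure_display} {T : measurableType d}
  {P : probability T R}.

Lemma Lfun2_scale (X : T -> R) a :
  X \in Lfun P 2%:E -> (fun t => a * X t) \in Lfun P 2%:E.
Proof.
move=> hX; have -> : (fun t => a * X t) = (a \o* X)%R.
  by apply/funext => t; rewrite /= mulrC.
exact: (Lfun_scale a (ler1n _ 2) hX).
Qed.

Lemma Lfun2_sum (f : nat -> T -> R) n :
  (forall i, (i < n)%N -> f i \in Lfun P 2%:E) ->
  (fun t => \sum_(0 <= i < n) f i t) \in Lfun P 2%:E.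
Proof.
elim: n => [|n IH] hf.
  under eq_fun do rewrite big_nil; exact: Lfun_cst.
under eq_fun do rewrite big_nat_recr //=.
apply: rpredD; first by rewrite lee1n.
  by move=> ?; apply: IH => i hi; apply: hf; exact: ltnW.
by move=> ?; exact: hf.
Qed.

Lemma covariance_scale (X Y : T -> R) a b :
  X \in Lfun P 2%:E -> Y \in Lfun P 2%:E ->
  covariance P (fun t => a * X t) (fun t => b * Y t)
  = ((a * b)%:E * covariance P X Y)%E.
Proof.
move=> hX hY.
have Pfin : P setT \is a fin_num := fin_num_measure P _ measurableT.
have aX : (a \o* X)%R \in Lfun P 2%:E := Lfun_scale a (ler1n _ 2) hX.
have -> : (fun t => a * X t) = (a \o* X)%R by apply/funext => t; rewrite /= mulrC.
have -> : (fun t => b * Y t) = (b \o* Y)%R by apply/funext => t; rewrite /= mulrC.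
rewrite (covarianceZr b (Lfun_subset12 Pfin aX) (Lfun_subset12 Pfin hY)
           (Lfun2_mul_Lfun1 aX hY)).
rewrite (covarianceZl a (Lfun_subset12 Pfin hX) (Lfun_subset12 Pfin hY)
           (Lfun2_mul_Lfun1 hX hY)).
by rewrite muleA -EFinM mulrC.
Qed.

Lemma covariance_suml (f : nat -> T -> R) n Y :
  (forall i, (i < n)%N -> f i \in Lfun P 2%:E) -> Y \in Lfun P 2%:E ->
  covariance P (fun t => \sum_(0 <= i < n) f i t) Y
  = (\sum_(0 <= i < n) covariance P (f i) Y)%E.
Proof.
elim: n => [|n IH] hf hY.
  by under eq_fun do rewrite big_nil; rewrite covariance_cst_l big_nil.
have hf' i : (i < n)%N -> f i \in Lfun P 2%:E by move=> hi; apply: hf; exact: ltnW.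
under eq_fun do rewrite big_nat_recr //=.
by rewrite covarianceDl ?Lfun2_sum ?hf // (IH hf' hY) big_nat_recr.
Qed.

Context {W : nat -> T -> R} {c : nat -> nat -> R} {n : nat}.
Hypothesis W_L2 : forall i, (i < n)%N -> W i \in Lfun P 2%:E.
Hypothesis cov_W : forall i j, (i < n)%N -> (j < n)%N ->
  covariance P (W i) (W j) = (c i j)%:E.

Lemma variance_lincomb (p : nat -> R) :
  'V_P[(fun t => \sum_(0 <= i < n) p i * W i t)%R]
  = (\sum_(0 <= i < n) \sum_(0 <= j < n) p i * p j * c i j)%:E.
Proof.
have pW i : (i < n)%N -> (fun t => p i * W i t) \in Lfun P 2%:E.
  by move=> hi; apply: Lfun2_scale; exact: W_L2.
rewrite /variance covariance_suml ?Lfun2_sum // -sumEFin.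
apply: eq_big_nat => i /andP[_ hi].
rewrite covarianceC covariance_suml ?pW // -sumEFin.
apply: eq_big_nat => j /andP[_ hj].
by rewrite covarianceC covariance_scale ?W_L2 // cov_W // -EFinM.
Qed.

Lemma sum_variance_scale (p : nat -> R) :
  (\sum_(0 <= i < n) 'V_P[(fun t => p i * W i t)%R])%E
  = (\sum_(0 <= i < n) p i ^+ 2 * c i i)%:E.
Proof.
rewrite -sumEFin; apply: eq_big_nat => i /andP[_ hi].
by rewrite /variance covariance_scale ?W_L2 // cov_W // -EFinM expr2.
Qed.

End SecondMoments.

Section MovingAverage.
Context {R : realFieldType}.

Definition ma1_cov (rho : R) (i j : nat) : R :=
  (i == j)%:R + rho * ((i.+1 == j) || (j.+1 == i))%:R.

Definition sumsq (p : nat -> R) n := \sum_(0 <= i < n) p i ^+ 2.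

Definition lag1_sum (p : nat -> R) n := \sum_(0 <= i < n.-1) p i * p i.+1.

Lemma sum_nat_dirac (F : nat -> R) (k n : nat) :
  \sum_(0 <= j < n) F j * (k == j)%:R = (k < n)%:R * F k.
Proof.
elim: n => [|n IH]; first by rewrite big_nil mul0r.
rewrite big_nat_recr //= IH.
have [->|hkn] := eqVneq k n; first by rewrite ltnn ltnSn mul0r mulr1 mul1r add0r.
by rewrite mulr0 addr0 ltnS [in RHS]leq_eqVlt (negbTE hkn).
Qed.

Lemma sum_lag1_dirac (p : nat -> R) n :
  \sum_(0 <= i < n) \sum_(0 <= j < n) p i * p j * (i.+1 == j)%:R = lag1_sum p n.
Proof.
under eq_bigr => i _ do rewrite (sum_nat_dirac (fun j => p i * p j)).
rewrite /lag1_sum; case: n => [|n]; first by rewrite !big_nil.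
rewrite big_nat_recr //= ltnn mul0r addr0.
by apply: eq_big_nat => i /andP[_ hi]; rewrite ltnS hi mul1r.
Qed.

Lemma ma1_quadratic_form (rho : R) (p : nat -> R) n :
  \sum_(0 <= i < n) \sum_(0 <= j < n) p i * p j * ma1_cov rho i j
  = sumsq p n + 2 * rho * lag1_sum p n.
Proof.
have split_cov i j : ma1_cov rho i j
    = (i == j)%:R + rho * (i.+1 == j)%:R + rho * (j.+1 == i)%:R.
  rewrite /ma1_cov -addrA -mulrDr; congr (_ + rho * _).
  have : ~~ ((i.+1 == j) && (j.+1 == i)) by apply/negP => /andP[/eqP <- /eqP]; lia.
  by case: (i.+1 == j); case: (j.+1 == i); rewrite /= ?addr0 ?add0r.
pose S (e : nat -> nat -> R) := \sum_(0 <= i < n) \sum_(0 <= j < n) p i * p j * e i j.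
rewrite -[LHS]/(S (ma1_cov rho)).
have -> : S (ma1_cov rho) = S (fun i j => (i == j)%:R)
    + rho * S (fun i j => (i.+1 == j)%:R) + rho * S (fun i j => (j.+1 == i)%:R).
  rewrite !mulr_sumr -!big_split; apply: eq_bigr => i _.
  rewrite !mulr_sumr -!big_split; apply: eq_bigr => j _.
  by rewrite split_cov !mulrDr !(mulrCA (p i * p j) rho).
have -> : S (fun i j => (i == j)%:R) = sumsq p n.
  apply: eq_big_nat => i /andP[_ hi].
  by rewrite (sum_nat_dirac (fun j => p i * p j)) hi mul1r expr2.
have -> : S (fun i j => (j.+1 == i)%:R) = lag1_sum p n.
  rewrite /S exchange_big -sum_lag1_dirac /=.
  by apply: eq_bigr => j _; apply: eq_bigr => i _; rewrite (mulrC (p i)).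
have -> : S (fun i j => (i.+1 == j)%:R) = lag1_sum p n by exact: sum_lag1_dirac.
ring.
Qed.

Lemma lag1_sum_le (p : nat -> R) n : `|lag1_sum p n| <= sumsq p n.
Proof.
case: n => [|n]; first by rewrite /lag1_sum /sumsq !big_nil normr0.
have amgm (x y : R) : `|x * y| <= (x ^+ 2 + y ^+ 2) / 2.
  rewrite normrM -(real_normK (num_real x)) -(real_normK (num_real y)).
  have := sqr_ge0 (`|x| - `|y|); rewrite sqrrB.
  by rewrite ler_pdivlMr //; lra.
apply: (le_trans (ler_norm_sum _ _ _)).
apply: (le_trans (ler_sum _ (fun i _ => amgm (p i) (p i.+1)))).
rewrite -big_distrl /= big_split /= ler_pdivrMr //.
have head : \sum_(0 <= i < n) p i ^+ 2 <= sumsq p n.+1.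
  by rewrite /sumsq big_nat_recr //= lerDl sqr_ge0.
have tail : \sum_(0 <= i < n) p i.+1 ^+ 2 <= sumsq p n.+1.
  by rewrite /sumsq big_nat_recl //= lerDr sqr_ge0.
lra.
Qed.

End MovingAverage.

(* The number of d-subsets of a K-set containing a fixed m-set; the guard is
   needed because [d - m] truncates to 0 when m > d. *)
Definition nsupsets (K d m : nat) : nat := if (m <= d)%N then 'C(K - m, d - m) else 0.

Lemma card_Svecs_supset K d (A : {set 'I_K}) :
  #|[set s in Svecs K d | A \subset [set i | s i]]| = nsupsets K d #|A|.
Proof.
set X := [set s in Svecs K d | _].
have inX s : (s \in X) = (#|[set i | s i]| == d) && (A \subset [set i | s i]).
  by rewrite !inE.
rewrite /nsupsets; case: ifP => hA; last first.
  apply/eqP; rewrite cards_eq0; apply/eqP/setP => s; rewrite inX inE.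
  apply/negbTE/andP => -[/eqP hd /subset_leq_card].
  by rewrite hd hA.
pose rest (s : {ffun 'I_K -> bool}) := [set i | s i] :\: A.
have rest_inj : {in X &, injective rest}.
  move=> s s'; rewrite !inX => /andP[_ /fintype.subsetP hs] /andP[_ /fintype.subsetP hs'] e.
  apply/ffunP => i; case hi : (i \in A).
    by have := hs i hi; have := hs' i hi; rewrite !inE => -> ->.
  by have := congr1 (fun B : {set 'I_K} => i \in B) e; rewrite !inE hi.
rewrite -(card_in_imset rest_inj).
have -> : rest @: X = [set C : {set 'I_K} | C \subset ~: A & #|C| == (d - #|A|)%N].
  apply/setP => C; apply/imsetP/idP.
    move=> [s]; rewrite inX => /andP[/eqP hd hs] ->; rewrite inE; apply/andP; split.
      by apply/fintype.subsetP => i; rewrite !inE => /andP[-> _].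
    by rewrite cardsD (finset.setIidPr hs) hd.
  rewrite inE => /andP[/fintype.subsetP hC /eqP hc].
  have CA : C :&: A = finset.set0.
    by apply/setP => i; rewrite !inE; apply/negbTE/andP => -[/hC]; rewrite inE => /negP.
  exists [ffun i => (i \in C) || (i \in A)].
    rewrite inX; have -> : [set i | [ffun i => (i \in C) || (i \in A)] i] = C :|: A.
      by apply/setP => i; rewrite !inE ffunE.
    rewrite cardsU hc CA cards0 subn0 subnK // eqxx /=.
    exact: finset.subsetUr.
  apply/setP => i; rewrite !inE ffunE.
  case hiA : (i \in A); rewrite /= ?andbF ?andbT ?orbF //.
  by apply/negbTE/negP => /hC; rewrite inE hiA.
by rewrite cards_draws cardsCs finset.setCK card_ord.
Qed.

Lemma nsupsets0_gt0 K d : (d <= K)%N -> (0 < nsupsets K d 0)%N.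
Proof. by move=> hd; rewrite /nsupsets !subn0 bin_gt0. Qed.

Lemma nsupsetsS K d m : (m < K)%N ->
  (nsupsets K d m.+1 * (K - m) = nsupsets K d m * (d - m))%N.
Proof.
move=> hmK; rewrite /nsupsets; case: (ltngtP m d) => h.
- by rewrite mulnC !subnS mul_bin_diag prednK ?subn_gt0 // mulnC.
- by rewrite !mul0n.
- by rewrite h subnn !muln0 mul0n.
Qed.

Definition overlap {R : numDomainType} {K} (i j k l : 'I_K) : R :=
  (k == i)%:R + (k == j)%:R + (l == i)%:R + (l == j)%:R.

Section InclusionProbability.
Context (R : realFieldType) (K d : nat).
Hypothesis dK : (d <= K)%N.

Definition incl_prob m : R := (nsupsets K d m)%:R / (nsupsets K d 0)%:R.

Lemma incl_prob0 : incl_prob 0 = 1.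
Proof. by rewrite /incl_prob divff // pnatr_eq0 -lt0n nsupsets0_gt0. Qed.

Lemma incl_probS m : (m < K)%N ->
  incl_prob m.+1 = incl_prob m * ((d - m)%:R / (K - m)%:R).
Proof.
move=> hm; rewrite /incl_prob.
have h0 : (nsupsets K d 0)%:R != 0 :> R by rewrite pnatr_eq0 -lt0n nsupsets0_gt0.
have h1 : (K - m)%:R != 0 :> R by rewrite pnatr_eq0 subn_eq0 -ltnNge.
have := congr1 (fun n => n%:R : R) (@nsupsetsS K d m hm); rewrite !natrM => e.
by apply: (mulIf h1); rewrite mulrAC e; field; rewrite h0 h1.
Qed.

Lemma incl_prob_01 m : (m <= K)%N -> 0 <= incl_prob m <= 1.
Proof.
elim: m => [|m IH] hm; first by rewrite incl_prob0 ler01 lexx.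
rewrite incl_probS //; have /andP[q0 q1] := IH (ltnW hm).
have r0 : 0 <= (d - m)%:R / (K - m)%:R :> R by exact: divr_ge0.
have r1 : (d - m)%:R / (K - m)%:R <= 1 :> R.
  by rewrite ler_pdivrMr ?ltr0n ?subn_gt0 // mul1r ler_nat leq_sub2r.
by rewrite mulr_ge0 //= mulr_ile1.
Qed.

Lemma ratio_subn_close m : (0 < K)%N -> (2 * m <= K)%N ->
  `|(d - m)%:R / (K - m)%:R - d%:R / K%:R| <= 2 * m%:R / K%:R :> R.
Proof.
move=> hK h2m.
have Kpos : 0 < K%:R :> R by rewrite ltr0n.
have Kmpos : 0 < (K - m)%:R :> R by rewrite ltr0n subn_gt0; lia.
have eKm : (K - m)%:R = K%:R - m%:R :> R by rewrite natrB //; lia.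
have m0 : 0 <= m%:R :> R by [].
have h2 : 2 * m%:R <= K%:R :> R by rewrite -(natrM R 2 m) ler_nat.
case: (leqP m d) => hmd; last first.
  rewrite (eqP (ltnW hmd : (d - m == 0)%N)) mul0r add0r normrN ger0_norm ?divr_ge0 //.
  rewrite ler_pM2r ?invr_gt0 //.
  have : d%:R <= m%:R :> R by rewrite ler_nat ltnW.
  lra.
have -> : (d - m)%:R / (K - m)%:R - d%:R / K%:R
    = - (m%:R * ((K%:R - d%:R) / K%:R)) / (K - m)%:R :> R.
  by rewrite natrB // eKm; field; rewrite -eKm !lt0r_neq0.
have u0 : 0 <= (K%:R - d%:R) / K%:R :> R by rewrite divr_ge0 // subr_ge0 ler_nat.
have u1 : (K%:R - d%:R) / K%:R <= 1 :> R by rewrite ler_pdivrMr // mul1r lerBlDr lerDl.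
rewrite mulNr normrN ger0_norm; last by rewrite divr_ge0 // mulr_ge0.
apply: (@le_trans _ _ (m%:R / (K - m)%:R)).
  by apply: ler_wpM2r; [rewrite invr_ge0 ltW | exact: ler_piMr].
rewrite ler_pdivrMr // mulrAC ler_pdivlMr // eKm.
have : 0 <= m%:R * (K%:R - 2 * m%:R) :> R by rewrite mulr_ge0 // subr_ge0.
lra.
Qed.

Lemma incl_prob_pow_close m : (0 < K)%N -> (2 * m <= K)%N ->
  `|incl_prob m - (d%:R / K%:R) ^+ m| <= 2 * m%:R ^+ 2 / K%:R.
Proof.
move=> hK; elim: m => [|m IH] hm.
  by rewrite incl_prob0 expr0 subrr normr0 expr0n mulr0 mul0r.
have Kpos : 0 < K%:R :> R by rewrite ltr0n.
set x := d%:R / K%:R; set r := (d - m)%:R / (K - m)%:R : R.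
have x0 : 0 <= x by rewrite divr_ge0.
have x1 : x <= 1 by rewrite ler_pdivrMr // mul1r ler_nat.
have /andP[q0 q1] : 0 <= incl_prob m <= 1.
  by apply: incl_prob_01; lia.
have -> : incl_prob m.+1 - x ^+ m.+1
    = incl_prob m * (r - x) + x * (incl_prob m - x ^+ m).
  by rewrite incl_probS; [rewrite exprSr /r; ring | lia].
apply: (le_trans (ler_normD _ _)).
rewrite (normrM (incl_prob m)) (normrM x) (ger0_norm q0) (ger0_norm x0).
have close_r : incl_prob m * `|r - x| <= 2 * m%:R / K%:R.
  by rewrite -[leRHS]mul1r ler_pM // ratio_subn_close //; lia.
have close_q : x * `|incl_prob m - x ^+ m| <= 2 * m%:R ^+ 2 / K%:R.
  by rewrite -[leRHS]mul1r ler_pM // IH //; lia.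
apply: (le_trans (lerD close_r close_q)); rewrite -mulrDl ler_pM2r ?invr_gt0 // -natr1.
have : 0 <= m%:R :> R by [].
nra.
Qed.

Lemma incl_prob_split_close a b : (0 < K)%N -> (2 * (a + b) <= K)%N ->
  `|incl_prob (a + b) - incl_prob a * incl_prob b|
  <= 2 * (a + b)%:R ^+ 2 / K%:R + 2 * a%:R ^+ 2 / K%:R + 2 * b%:R ^+ 2 / K%:R.
Proof.
move=> hK hab.
pose x : R := d%:R / K%:R.
have x0 : 0 <= x by rewrite divr_ge0.
have x1 : x <= 1 by rewrite ler_pdivrMr ?ltr0n // mul1r ler_nat.
have /andP[qa0 qa1] : 0 <= incl_prob a <= 1.
  by apply: incl_prob_01; lia.
have /andP[qb0 qb1] : 0 <= incl_prob b <= 1.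
  by apply: incl_prob_01; lia.
have -> : incl_prob (a + b) - incl_prob a * incl_prob b
    = (incl_prob (a + b) - x ^+ (a + b)) + incl_prob b * (x ^+ a - incl_prob a)
      + x ^+ a * (x ^+ b - incl_prob b).
  by rewrite exprD; ring.
have close_a : `|incl_prob b * (x ^+ a - incl_prob a)| <= 2 * a%:R ^+ 2 / K%:R.
  rewrite normrM distrC -[leRHS]mul1r ger0_norm // ler_pM //.
  by apply: incl_prob_pow_close => //; lia.
have close_b : `|x ^+ a * (x ^+ b - incl_prob b)| <= 2 * b%:R ^+ 2 / K%:R.
  rewrite normrM distrC -[leRHS]mul1r ger0_norm ?exprn_ge0 // ler_pM ?exprn_ge0 ?exprn_ile1 //.
  by apply: incl_prob_pow_close => //; lia.
apply: (le_trans (ler_normD _ _)); apply: lerD close_b.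
by apply: (le_trans (ler_normD _ _)); apply: lerD close_a; exact: incl_prob_pow_close.
Qed.

(* Inclusion of two disjoint pairs in S is nearly independent; when the pairs
   meet, [overlap] is at least 1 and the trivial bound suffices. *)
Lemma incl_prob_pairs_close (i j k l : 'I_K) : (8 <= K)%N ->
  `|incl_prob #|[set i; j] :|: [set k; l]|
    - incl_prob #|[set i; j]| * incl_prob #|[set k; l]| |
  <= 48 / K%:R + overlap i j k l.
Proof.
move=> hK.
have Kpos : 0 < K%:R :> R by rewrite ltr0n; lia.
have ov0 : 0 <= overlap i j k l :> R by rewrite /overlap !addr_ge0.
have pair_card (u v : 'I_K) : (#|[set u; v]| <= 2)%N by rewrite cards2; case: (u != v).
have [disj|/set0Pn [x x_in]] := eqVneq ([set i; j] :&: [set k; l]) finset.set0.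
  rewrite cardsU disj cards0 subn0.
  have := pair_card i j; have := pair_card k l.
  move: #|[set i; j]| #|[set k; l]| => b a hb ha.
  apply: (le_trans (incl_prob_split_close b a _ _)); [lia | lia |].
  rewrite ler_wpDr // -!mulrDl ler_pM2r ?invr_gt0 //.
  have : a%:R <= 2 :> R by rewrite (ler_nat R a 2).
  have : b%:R <= 2 :> R by rewrite (ler_nat R b 2).
  have : 0 <= a%:R :> R by []. have : 0 <= b%:R :> R by [].
  rewrite natrD; nra.
have ov1 : 1 <= overlap i j k l :> R.
  have one_of (b1 b2 b3 b4 : bool) : [|| b1, b2, b3 | b4] ->
      1 <= b1%:R + b2%:R + b3%:R + b4%:R :> R.
    by case: b1; case: b2; case: b3; case: b4 => //= _; lra.
  move: x_in; rewrite !inE => /andP[/orP[]/eqP-> /orP[]/eqP->]; apply: one_of; rewrite eqxx ?orbT //.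
have card_le (A : {set 'I_K}) : (#|A| <= K)%N by rewrite -[leqRHS]card_ord max_card.
have /andP[u0 u1] := incl_prob_01 _ (card_le ([set i; j] :|: [set k; l])).
have /andP[v0 v1] := incl_prob_01 _ (card_le [set i; j]).
have /andP[w0 w1] := incl_prob_01 _ (card_le [set k; l]).
have := mulr_ge0 v0 w0; have := mulr_ile1 v0 w0 v1 w1.
have : 0 <= 48 / K%:R :> R by rewrite divr_ge0.
rewrite ler_norml; lra.
Qed.

End InclusionProbability.

Section HypergeometricMoments.
Context (R : realType) (K d : nat).
Hypothesis dK : (d <= K)%N.
Local Notation F := {ffun 'I_K -> bool}.

Lemma card_Svecs : #|Svecs K d| = nsupsets K d 0.
Proof.
rewrite -(cards0 'I_K) -card_Svecs_supset.
by apply: eq_card => s; rewrite !inE finset.sub0set andbT.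
Qed.

Lemma meanS_supset (A : {set 'I_K}) :
  meanS d (fun s : F => (A \subset [set x | s x])%:R) = incl_prob R K d #|A|.
Proof.
rewrite /meanS /incl_prob card_Svecs mulrC -card_Svecs_supset -sum1_card natr_sum.
congr (_ / _); rewrite [RHS]big_mkcond [LHS]big_mkcond; apply: eq_bigr => s _.
by rewrite !inE; case: (_ \subset _); rewrite ?andbT ?andbF; case: ifP.
Qed.

Lemma meanS_sum (I : finType) (G : I -> F -> R) :
  meanS d (fun s => \sum_(i : I) G i s) = \sum_(i : I) meanS d (G i).
Proof. by rewrite /meanS exchange_big big_distrr. Qed.

Lemma meanSZ k (G : F -> R) : meanS d (fun s => k * G s) = k * meanS d G.
Proof. by rewrite /meanS -big_distrr /= mulrCA. Qed.

Lemma varS_meanS (G : F -> R) :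
  varS d G = meanS d (fun s => G s ^+ 2) - meanS d G ^+ 2.
Proof.
rewrite /varS; set m := meanS d G.
have n0 : #|Svecs K d|%:R != 0 :> R by rewrite card_Svecs pnatr_eq0 -lt0n nsupsets0_gt0.
have -> : (fun s => (G s - m) ^+ 2) = (fun s => G s ^+ 2 + (- (2 * m) * G s + m ^+ 2)).
  by apply/funext => s; rewrite sqrrB; ring.
rewrite /meanS !big_split /= -big_distrr /= sumr_const.
by rewrite -/(meanS d (fun s => G s ^+ 2)) /m /meanS; field.
Qed.

End HypergeometricMoments.

Lemma varS_ge0 (R : realType) K d (G : {ffun 'I_K -> bool} -> R) : 0 <= varS d G.
Proof.
rewrite /varS /meanS mulr_ge0 ?invr_ge0 //.
by apply: sumr_ge0 => s _; exact: sqr_ge0.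
Qed.

Section QuadraticFormOfS.
Context {R : realType} {K : nat} (d : nat) (c : 'I_K -> 'I_K -> R).
Hypothesis dK : (d <= K)%N.
Local Notation F := {ffun 'I_K -> bool}.
Local Notation ones s := ([set x | s x] : {set 'I_K}).

Definition quadS (s : F) : R := \sum_(i < K) \sum_(j < K) (s i)%:R * (s j)%:R * c i j.

Lemma natr_subset_setU (s : F) (A B : {set 'I_K}) :
  (A \subset ones s)%:R * (B \subset ones s)%:R = (A :|: B \subset ones s)%:R :> R.
Proof.
by rewrite finset.subUset; case: (A \subset _); case: (B \subset _);
  rewrite /= ?mulr1 ?mulr0.
Qed.

Lemma quadS_supset (s : F) :
  quadS s = \sum_(i < K) \sum_(j < K) c i j * ([set i; j] \subset ones s)%:R.
Proof.
apply: eq_bigr => i _; apply: eq_bigr => j _.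
rewrite -[[set i; j]]/([set i] :|: [set j]) -natr_subset_setU !finset.sub1set !inE.
by rewrite mulrC.
Qed.

Lemma varS_quadS :
  varS d quadS = \sum_(i < K) \sum_(j < K) \sum_(k < K) \sum_(l < K)
    c i j * c k l * (incl_prob R K d #|[set i; j] :|: [set k; l]|
                     - incl_prob R K d #|[set i; j]| * incl_prob R K d #|[set k; l]|).
Proof.
have mean1 : meanS d quadS
    = \sum_(i < K) \sum_(j < K) c i j * incl_prob R K d #|[set i; j]|.
  rewrite (funext quadS_supset).
  rewrite meanS_sum; apply: eq_bigr => i _; rewrite meanS_sum; apply: eq_bigr => j _.
  by rewrite meanSZ meanS_supset.
have mean2 : meanS d (fun s => quadS s ^+ 2)
    = \sum_(i < K) \sum_(j < K) \sum_(k < K) \sum_(l < K)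
        c i j * c k l * incl_prob R K d #|[set i; j] :|: [set k; l]|.
  have -> : (fun s => quadS s ^+ 2) = fun s =>
      \sum_(i < K) \sum_(j < K) \sum_(k < K) \sum_(l < K)
        c i j * c k l * ([set i; j] :|: [set k; l] \subset ones s)%:R.
    apply/funext => s; rewrite quadS_supset expr2 mulr_suml; apply: eq_bigr => i _.
    rewrite mulr_suml; apply: eq_bigr => j _; rewrite mulr_sumr; apply: eq_bigr => k _.
    rewrite mulr_sumr; apply: eq_bigr => l _.
    by rewrite -(natr_subset_setU s [set i; j]) mulrACA.
  rewrite meanS_sum; apply: eq_bigr => i _; rewrite meanS_sum; apply: eq_bigr => j _.
  rewrite meanS_sum; apply: eq_bigr => k _; rewrite meanS_sum; apply: eq_bigr => l _.
  by rewrite meanSZ meanS_supset.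
rewrite varS_meanS // mean1 mean2 expr2 mulr_suml -sumrB; apply: eq_bigr => i _.
rewrite mulr_suml -sumrB; apply: eq_bigr => j _.
rewrite mulr_sumr -sumrB; apply: eq_bigr => k _.
rewrite mulr_sumr -sumrB; apply: eq_bigr => l _.
ring.
Qed.

End QuadraticFormOfS.

Lemma sum_ord_eq_inj_le1 (R : numDomainType) K (g : nat -> nat) (y : nat) :
  injective g -> \sum_(k < K) (g k == y)%:R <= 1 :> R.
Proof.
move=> g_inj; case: (pickP (fun k : 'I_K => g k == y)) => [k0 hk0 | none]; last first.
  by rewrite big1 ?ler01 // => k _; rewrite none.
rewrite (bigD1 k0) //= hk0 big1 ?addr0 // => k hk.
suff -> : (g k == y) = false by [].
apply: contraNF hk => /eqP gk; apply/eqP/val_inj/g_inj.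
by rewrite gk (eqP hk0).
Qed.

Section BandedQuadraticForm.
Context {R : realType} {K : nat}.

Definition band (i j : 'I_K) : R :=
  ((j : nat) == i)%:R + ((j : nat) == i.+1)%:R + ((j : nat).+1 == i)%:R.

Lemma band_row_le (i : 'I_K) : \sum_(j < K) band i j <= 3.
Proof.
rewrite !big_split /=.
have := sum_ord_eq_inj_le1 R K id i (@inj_id nat).
have := sum_ord_eq_inj_le1 R K id i.+1 (@inj_id nat).
have := sum_ord_eq_inj_le1 R K succn i succn_inj.
rewrite /=; lra.
Qed.

Lemma band_col_le (j : 'I_K) : \sum_(i < K) band i j <= 3.
Proof.
under eq_bigr do rewrite /band (eq_sym j.+1) !(eq_sym (j : nat)).
rewrite !big_split /=.
have := sum_ord_eq_inj_le1 R K id j (@inj_id nat).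
have := sum_ord_eq_inj_le1 R K succn j succn_inj.
have := sum_ord_eq_inj_le1 R K id j.+1 (@inj_id nat).
rewrite /=; lra.
Qed.

End BandedQuadraticForm.

Section BandedVariance.
Context {R : realType} {K d : nat} {c : 'I_K -> 'I_K -> R} {D : R}.
Hypotheses (K8 : (8 <= K)%N) (dK : (d <= K)%N) (D0 : 0 <= D).
Hypothesis c_band : forall i j, `|c i j| <= D / K%:R * band i j.

Let Kpos : 0 < K%:R :> R. Proof. by rewrite ltr0n; lia. Qed.
Let e0 : 0 <= D / K%:R. Proof. by rewrite divr_ge0 // ltW. Qed.

Lemma banded_row_sum i : \sum_(j < K) `|c i j| <= 3 * (D / K%:R).
Proof.
apply: (le_trans (ler_sum _ (fun j _ => c_band i j))).
by rewrite -mulr_sumr mulrC ler_wpM2r // band_row_le.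
Qed.

Lemma banded_col_sum j : \sum_(i < K) `|c i j| <= 3 * (D / K%:R).
Proof.
apply: (le_trans (ler_sum _ (fun i _ => c_band i j))).
by rewrite -mulr_sumr mulrC ler_wpM2r // band_col_le.
Qed.

Lemma banded_sum : \sum_(i < K) \sum_(j < K) `|c i j| <= 3 * D.
Proof.
apply: (le_trans (ler_sum _ (fun i _ => banded_row_sum i))).
by rewrite sumr_const card_ord -[leLHS]mulr_natr -mulrA divfK ?lt0r_neq0.
Qed.

Lemma banded_overlap_sum (i j : 'I_K) :
  \sum_(k < K) \sum_(l < K) `|c k l| * (48 / K%:R + overlap i j k l)
  <= 156 * (D / K%:R).
Proof.
pose at_row x := \sum_(k < K) \sum_(l < K) `|c k l| * (k == x)%:R.
pose at_col x := \sum_(k < K) \sum_(l < K) `|c k l| * (l == x)%:R.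
have row x : at_row x <= 3 * (D / K%:R).
  rewrite /at_row (bigD1 x) //= [X in _ + X]big1 ?addr0.
    by under eq_bigr do rewrite eqxx mulr1; exact: banded_row_sum.
  by move=> k /negbTE kx; apply: big1 => l _; rewrite kx mulr0.
have col x : at_col x <= 3 * (D / K%:R).
  rewrite /at_col exchange_big /= (bigD1 x) //= [X in _ + X]big1 ?addr0.
    by under eq_bigr do rewrite eqxx mulr1; exact: banded_col_sum.
  by move=> l /negbTE lx; apply: big1 => k _; rewrite lx mulr0.
have -> : \sum_(k < K) \sum_(l < K) `|c k l| * (48 / K%:R + overlap i j k l)
    = 48 / K%:R * \sum_(k < K) \sum_(l < K) `|c k l|
      + (at_row i + at_row j + at_col i + at_col j).
  rewrite mulr_sumr -!big_split /=; apply: eq_bigr => k _.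
  rewrite mulr_sumr -!big_split /=; apply: eq_bigr => l _.
  by rewrite /overlap; ring.
have : 48 / K%:R * \sum_(k < K) \sum_(l < K) `|c k l| <= 144 * (D / K%:R).
  have -> : 144 * (D / K%:R) = 48 / K%:R * (3 * D) by ring.
  by rewrite ler_wpM2l ?divr_ge0 ?banded_sum.
have := row i; have := row j; have := col i; have := col j.
lra.
Qed.

Lemma varS_quadS_banded : varS d (quadS c) <= 468 * D ^+ 2 / K%:R.
Proof.
have term i j k l : c i j * c k l * (incl_prob R K d #|[set i; j] :|: [set k; l]|
      - incl_prob R K d #|[set i; j]| * incl_prob R K d #|[set k; l]|)
    <= `|c i j| * (`|c k l| * (48 / K%:R + overlap i j k l)).
  apply: (le_trans (ler_norm _)); rewrite !normrM -mulrA.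
  by do 2 apply: ler_wpM2l => //; exact: incl_prob_pairs_close.
rewrite varS_quadS //.
apply: (@le_trans _ _ (\sum_(i < K) \sum_(j < K) `|c i j| * (156 * (D / K%:R)))).
  apply: ler_sum => i _; apply: ler_sum => j _.
  apply: (le_trans (ler_sum _ (fun k _ => ler_sum _ (fun l _ => term i j k l)))).
  under eq_bigr do rewrite -mulr_sumr.
  by rewrite -mulr_sumr ler_wpM2l // banded_overlap_sum.
under eq_bigr do rewrite -mulr_suml.
have -> : 468 * D ^+ 2 / K%:R = 3 * D * (156 * (D / K%:R)) by ring.
by rewrite -mulr_suml ler_wpM2r ?mulr_ge0 // banded_sum.
Qed.

End BandedVariance.

Section Complement.
Context {R : realType} {K : nat} (d : nat).
Hypothesis dK : (d <= K)%N.
Local Notation F := {ffun 'I_K -> bool}.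

Definition ffun_negb (s : F) : F := [ffun i => ~~ s i].

Lemma ffun_negb_inj : injective ffun_negb.
Proof.
move=> s s' e; apply/ffunP => i.
by have := congr1 (fun f : F => f i) e; rewrite !ffunE => /negb_inj.
Qed.

Lemma ffun_negb_Svecs (s : F) :
  (ffun_negb s \in Svecs K (K - d)) = (s \in Svecs K d).
Proof.
rewrite !inE.
have -> : [set i | ffun_negb s i] = ~: [set i | s i].
  by apply/setP => i; rewrite !inE ffunE.
rewrite cardsCs finset.setCK card_ord.
have : (#|[set i | s i]| <= K)%N by rewrite -[leqRHS]card_ord max_card.
by move: #|_| => n nK; apply/eqP/eqP; lia.
Qed.

Lemma meanS_negb (G : F -> R) :
  meanS d (fun s => G (ffun_negb s)) = meanS (K - d) G.
Proof.
rewrite /meanS !card_Svecs /nsupsets /= ?subn0 ?leq_subr // bin_sub //.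
congr (_ * _); rewrite [RHS](reindex_inj ffun_negb_inj) /=.
by apply: eq_bigl => s; rewrite ffun_negb_Svecs.
Qed.

Lemma varS_negb (G : F -> R) : varS d (fun s => G (ffun_negb s)) = varS (K - d) G.
Proof. by rewrite /varS meanS_negb (meanS_negb (fun s => (G s - _) ^+ 2)). Qed.

Lemma quadS_ffun_negb (c : 'I_K -> 'I_K -> R) (s : F) :
  quadS c (ffun_negb s) = \sum_(i < K) \sum_(j < K) (1 - (s i)%:R) * (1 - (s j)%:R) * c i j.
Proof.
have natr_negb (b : bool) : (~~ b)%:R = 1 - b%:R :> R by case: b; rewrite ?subrr ?subr0.
by apply: eq_bigr => i _; apply: eq_bigr => j _; rewrite !ffunE !natr_negb.
Qed.

End Complement.
Local Open Scope classical_set_scope.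
Local Open Scope ring_scope.

Lemma varS_quadS_banded_cvg0 {R : realType} {D : R} {d1 : nat -> nat}
    {c : forall K, 'I_K -> 'I_K -> R} :
  0 <= D -> (forall K, (d1 K <= K)%N) ->
  (forall K (i j : 'I_K), `|c K i j| <= D / K%:R * band i j) ->
  (fun K => varS (d1 K) (quadS (c K))) @ \oo --> 0.
Proof.
move=> D0 d1K c_band.
have bound_cvg : (fun K => 936 * D ^+ 2 * harmonic K) @ \oo --> (0 : R).
  by rewrite -(mulr0 (936 * D ^+ 2)); apply: cvgMl_tmp; exact: cvg_harmonic.
apply: (squeeze_cvgr _ (cvg_cst 0) bound_cvg); near=> K.
have K8 : (8 <= K)%N by near: K; exact: nbhs_infty_ge.
rewrite varS_ge0 /=; apply: (le_trans (varS_quadS_banded K8 (d1K K) D0 (c_band K))).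
have Kpos : 0 < K%:R :> R by rewrite ltr0n; lia.
rewrite /harmonic /= ler_pdivrMr // mulrAC ler_pdivlMr ?ltr0n // -natr1.
have : 0 <= D ^+ 2 * (K%:R - 1) by rewrite mulr_ge0 ?sqr_ge0 // subr_ge0 ler1n; lia.
lra.
Unshelve. all: by end_near.
Qed.

(* With x_K = rho B_K / A_K the ratio is 1 / (1 + 2 x_K); as |x_K| <= |rho| < 1/2,
   the limit of x_K is finite and 1 + 2 x_K stays above 1 - 2 |rho| > 0. *)
Lemma ma1_ratio_cvg {R : realType} {rho : R} {A B : nat -> R} {l : \bar R} :
  `|rho| < 2^-1 -> (forall K, `|B K| <= A K) ->
  (\forall K \near \oo, 0 < A K + 2 * rho * B K) ->
  (fun K => (rho * B K / A K)%:E) @ \oo --> l ->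
  exists l' : R, (fun K => A K / (A K + 2 * rho * B K)) @ \oo --> l'.
Proof.
move=> rho_small B_le V_gt0 x_cvg.
pose x K := rho * B K / A K.
have x_le K : `|x K| <= `|rho|.
  rewrite /x; have [->|A0] := eqVneq (A K) 0; first by rewrite invr0 mulr0 normr0.
  have Apos : 0 < A K by rewrite lt0r A0 (le_trans _ (B_le K)).
  by rewrite normrM normfV (gtr0_norm Apos) ler_pdivrMr // normrM ler_wpM2l.
have lge : ((- `|rho|)%:E <= l)%E.
  apply: (cvge_ge _ x_cvg); apply: nearW => K.
  by have := x_le K; rewrite lee_fin ler_norml => /andP[].
have lle : (l <= `|rho|%:E)%E.
  apply: (cvge_le _ x_cvg); apply: nearW => K.
  by have := x_le K; rewrite lee_fin ler_norml => /andP[].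
have l_fin : l \is a fin_num.
  by rewrite fin_numElt (lt_le_trans (ltNyr _) lge) (le_lt_trans lle (ltry _)).
move: x_cvg lge; rewrite -(fineK l_fin) lee_fin; move: (fine l) => {l_fin lle} {}l x_cvg lge.
have x_cvg' : x @ \oo --> l := fine_cvg x_cvg.
have rho_bounds : - 2^-1 < rho < 2^-1 by rewrite -ltr_norml.
have denom_gt0 : 0 < 1 + 2 * l.
  have : - `|rho| > - 2^-1 by rewrite ltrN2.
  lra.
exists (1 + 2 * l)^-1.
have : (fun K => (1 + 2 * x K)^-1) @ \oo --> (1 + 2 * l)^-1.
  apply: cvgV; first exact: lt0r_neq0.
  by apply: cvgD; [exact: cvg_cst | apply: cvgMl_tmp; exact: x_cvg'].
apply: cvg_trans; apply: near_eq_cvg; near=> K.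
have V_pos : 0 < A K + 2 * rho * B K by near: K.
have A_pos : 0 < A K.
  have : `|rho * B K| <= 2^-1 * A K.
    by rewrite normrM ler_pM ?normr_ge0 ?B_le ?ltW.
  move: V_pos; rewrite ler_norml -mulrA; move: (rho * B K) => y; lra.
by rewrite /x; field; rewrite !lt0r_neq0.
Unshelve. all: by end_near.
Qed.

Lemma ma1_cov_band (R : realType) K (rho : R) (i j : 'I_K) :
  `|rho| <= 1 -> `|ma1_cov rho i j| <= band i j.
Proof.
rewrite ler_norml => /andP[rho_ge rho_le].
rewrite /ma1_cov /band (eq_sym (j : nat)) (eq_sym (j : nat) i.+1).
case: (i == j :> nat); case: (i.+1 == j); case: (j.+1 == i);
  rewrite /= ?mulr1 ?mulr0 ?addr0 ?add0r ?normr0 ?normr1 // ler_norml; lra.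
Qed.

Section MA1Model.
Context {R : realType} {d : measure_display} {T : nat -> measurableType d}
  {P : forall K, probability (T K) R} {W : forall K, nat -> T K -> R}
  {p : nat -> nat -> R} {rho C : R}.
Hypothesis W_L2 : forall K i, (i < K)%N -> W K i \in Lfun (P K) 2%:E.
Hypothesis cov_W : forall K i j, (i < K)%N -> (j < K)%N ->
  covariance (P K) (W K i) (W K j) = (ma1_cov rho i j)%:E.
Hypothesis rho_small : `|rho| < 2^-1.
Hypothesis p_small : forall K i, (i < K)%N -> `|p K i| <= C / Num.sqrt K%:R.

Lemma variance_ma1 K :
  'V_(P K)[(fun t => \sum_(0 <= i < K) p K i * W K i t)%R]
  = (sumsq (p K) K + 2 * rho * lag1_sum (p K) K)%:E.
Proof. by rewrite (variance_lincomb (W_L2 K) (cov_W K)) ma1_quadratic_form. Qed.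

Lemma sum_variance_ma1 K :
  (\sum_(0 <= i < K) 'V_(P K)[(fun t => p K i * W K i t)%R])%E
  = (sumsq (p K) K)%:E.
Proof.
rewrite (sum_variance_scale (W_L2 K) (cov_W K)); congr (_%:E).
by apply: eq_bigr => i _; rewrite /ma1_cov eqxx orbb gtn_eqF //= mulr0 addr0 mulr1.
Qed.

Lemma weight_mul_le {K i j : nat} : (i < K)%N -> (j < K)%N -> `|p K i * p K j| <= C ^+ 2 / K%:R.
Proof.
move=> iK jK; rewrite normrM.
have -> : C ^+ 2 / K%:R = C / Num.sqrt K%:R * (C / Num.sqrt K%:R).
  by rewrite -expr2 expr_div_n sqr_sqrtr.
by rewrite ler_pM ?normr_ge0 ?p_small.
Qed.

Lemma sumsq_le K : sumsq (p K) K <= C ^+ 2.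
Proof.
case: K => [|K]; first by rewrite /sumsq big_nil sqr_ge0.
apply: (@le_trans _ _ (\sum_(0 <= i < K.+1) C ^+ 2 / K.+1%:R)).
  apply: ler_sum_nat => i /andP[_ iK].
  by rewrite expr2 (le_trans (ler_norm _) (weight_mul_le iK iK)).
by rewrite sumr_const_nat subn0 -[leLHS]mulr_natr divfK ?pnatr_eq0.
Qed.

Lemma variance_ma1_le K : sumsq (p K) K + 2 * rho * lag1_sum (p K) K <= 2 * C ^+ 2.
Proof.
have : `|rho * lag1_sum (p K) K| <= 2^-1 * sumsq (p K) K.
  by rewrite normrM ler_pM ?normr_ge0 ?lag1_sum_le // ltW.
have := sumsq_le K; have : 0 <= sumsq (p K) K by apply: sumr_ge0 => i _; exact: sqr_ge0.
rewrite ler_norml -mulrA; move: (rho * _) => y; lra.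
Qed.

Lemma cov_ma1_band K (i j : 'I_K) :
  `|fine (covariance (P K) (fun t => p K i * W K i t) (fun t => p K j * W K j t))|
  <= C ^+ 2 / K%:R * band i j.
Proof.
rewrite covariance_scale ?W_L2 // cov_W // -EFinM /= normrM.
rewrite ler_pM ?normr_ge0 ?weight_mul_le ?ma1_cov_band //.
by rewrite (le_trans (ltW rho_small)) // invf_le1 ?ler1n.
Qed.

End MA1Model.

Theorem mainTheorem8 (R : realType) (d : measure_display)
  (T : nat -> measurableType d) (P : forall K, probability (T K) R)
  (W : forall K, nat -> T K -> R) (pi : nat -> nat -> R)
  (d1 : nat -> nat) (r rho : R) :
  (forall K i, (i < K)%N -> W K i \in Lfun (P K) 2%:E) ->
  (forall K, (d1 K <= K)%N) ->
  ((fun K => (d1 K)%:R : R) @ \oo --> +oo) ->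
  (0 < r) ->
  ((fun K => ((K - d1 K)%:R / (d1 K)%:R : R)) @ \oo --> r) ->
  (forall K i j, (i < K)%N -> (j < K)%N ->
     covariance (P K) (W K i) (W K j) =
       ((i == j)%:R + rho * ((i.+1 == j) || (j.+1 == i))%:R)%:E) ->
  `|rho| < 2^-1 ->
  (exists C : R, forall K i, (i < K)%N -> `|pi K i| <= C / Num.sqrt (K%:R)) ->
  (exists l : \bar R,
     (fun K => (rho * (\sum_(0 <= i < K.-1) pi K i * pi K i.+1)
                 / (\sum_(0 <= i < K) pi K i ^+ 2))%:E) @ \oo --> l) ->
  (exists eps : R, 0 < eps /\ forall K, (0 < K)%N ->
     (eps%:E < 'V_(P K)[(fun t => \sum_(0 <= i < K) pi K i * W K i t)%R])%E) ->
  [/\ (exists eps M : R, 0 < eps /\ eps <= M /\ forall K, (0 < K)%N ->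
        (eps%:E <= 'V_(P K)[(fun t => \sum_(0 <= i < K) pi K i * W K i t)%R] <= M%:E)%E),
      ((fun K => varS (d1 K) (fun s : {ffun 'I_K -> bool} =>
          \sum_(i < K) \sum_(j < K) (s i)%:R * (s j)%:R *
            fine (covariance (P K) (fun t => pi K i * W K i t)
                                   (fun t => pi K j * W K j t)))) @ \oo --> 0)
      /\
      ((fun K => varS (d1 K) (fun s : {ffun 'I_K -> bool} =>
          \sum_(i < K) \sum_(j < K) (1 - (s i)%:R) * (1 - (s j)%:R) *
            fine (covariance (P K) (fun t => pi K i * W K i t)
                                   (fun t => pi K j * W K j t)))) @ \oo --> 0)
    & (exists l : R,
        (fun K => fine (\sum_(0 <= i < K) 'V_(P K)[(fun t => pi K i * W K i t)%R])%E
                  / fine ('V_(P K)[(fun t => \sum_(0 <= i < K) pi K i * W K i t)%R]))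
        @ \oo --> l)].
Proof.
(* The bound behind (P2) is uniform in d1. *)
move=> W_L2 d1K _ _ _ cov_W rho_small [C pi_small] [l x_cvg] [eps [eps_gt0 V_gt]].
have V_eq := variance_ma1 (p := pi) W_L2 cov_W.
have V_le := variance_ma1_le rho_small pi_small.
pose c K (i j : 'I_K) :=
  fine (covariance (P K) (fun t => pi K i * W K i t) (fun t => pi K j * W K j t)).
have c_band : forall K (i j : 'I_K), `|c K i j| <= C ^+ 2 / K%:R * band i j.
  exact: cov_ma1_band W_L2 cov_W rho_small pi_small.
have V_gt0 : \forall K \near \oo, 0 < sumsq (pi K) K + 2 * rho * lag1_sum (pi K) K.
  near=> K; have K0 : (0 < K)%N by near: K; exact: nbhs_infty_gt.
  by have := V_gt K K0; rewrite V_eq lte_fin; exact: lt_trans.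
split.
- exists eps, (2 * C ^+ 2); split => //; split.
    by have := V_gt 1%N isT; rewrite V_eq lte_fin => /ltW /le_trans; apply.
  move=> K K0; rewrite V_eq !lee_fin V_le andbT.
  by have := V_gt K K0; rewrite V_eq lte_fin => /ltW.
- split; first exact: (varS_quadS_banded_cvg0 (sqr_ge0 C) d1K c_band).
  apply: cvg_trans (varS_quadS_banded_cvg0 (sqr_ge0 C) (fun K => leq_subr _ K) c_band).
  apply: near_eq_cvg; apply: nearW => K /=.
  by rewrite -varS_negb ?d1K //; congr varS; apply/funext => s; exact: quadS_ffun_negb.
- have [l' ratio_cvg] := ma1_ratio_cvg (A := fun K => sumsq (pi K) K)
    (B := fun K => lag1_sum (pi K) K) rho_small (fun K => lag1_sum_le _ K) V_gt0 x_cvg.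
  exists l'; apply: cvg_trans ratio_cvg; apply: near_eq_cvg; apply: nearW => K /=.
  by rewrite (sum_variance_ma1 W_L2 cov_W) V_eq.
Unshelve. all: by end_near.
Qed.
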